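(* For every even integer $k\ge 2$ there exists a probabilistic single-item auction with $n=k+1$ bidders and $m=k+1$ item types such that the maximum expected revenue over all mixed signaling schemes is exactly twice the maximum expected revenue over all pure signaling schemes.
   Context: A probabilistic single-item auction consists of $n\ge 2$ bidders, $m$ item types, a probability distribution $(p_1,\dots,p_m)$ over types, and nonnegative valuations $v_{i,j}$ (value of bidder $i$ for an item of type $j$), all known to the auctioneer. The auctioneer observes the realized type and broadcasts a signal; bidders then participate in a second-price auction, each bidding their expected valuation conditional on the signal. A mixed signaling scheme is a finite set $\mathcal{S}$ of signals and a map $\varphi:[m]\times\mathcal{S}\to[0,1]$ with $\sum_{S\in\mathcal{S}}\varphi(j,S)=1$ for every type $j$; on type $j$ signal $S$ is sent with probability $\varphi(j,S)$. A pure signaling scheme is one with $\varphi(j,S)\in\{0,1\}$ for all $j,S$ (equivalently, a partition of the set of types). Writing $\psi_{i,j}=p_jv_{i,j}$ and $\mathrm{max2}$ for the second-largest entry of a list (counted with multiplicity), the expected revenue of $\varphi$ is $\sum_{S\in\mathcal{S}}\mathrm{max2}_i\big\{\sum_j \psi_{i,j}\varphi(j,S)\big\}$. *)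

From mathcomp Require Import all_boot all_order all_algebra.
Set Implicit Arguments. Unset Strict Implicit. Unset Printing Implicit Defensive.
Import Order.TTheory GRing.Theory Num.Theory.
Local Open Scope ring_scope.

(* Second-largest entry of a family x_1..x_n (counted with multiplicity):
   the entry at position 1 (0-based) of the list sorted in nonincreasing order. *)
Definition max2 (R : realDomainType) (n : nat) (x : 'I_n -> R) : R :=
  nth 0 (sort (fun a b : R => b <= a) [seq x i | i <- enum 'I_n]) 1.

Definition is_auction (R : realDomainType) (n m : nat)
    (p : 'I_m -> R) (v : 'I_n -> 'I_m -> R) : Prop :=
  (1 < n)%N /\ (forall j, 0 <= p j) /\ \sum_(j < m) p j = 1 /\
  (forall i j, 0 <= v i j).

Definition mixed_scheme (R : realDomainType) (m s : nat)
    (phi : 'I_m -> 'I_s -> R) : Prop :=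
  (forall j S, 0 <= phi j S /\ phi j S <= 1) /\
  (forall j, \sum_(S < s) phi j S = 1).

Definition pure_scheme (R : realDomainType) (m s : nat)
    (phi : 'I_m -> 'I_s -> R) : Prop :=
  mixed_scheme phi /\ (forall j S, phi j S = 0 \/ phi j S = 1).

Definition revenue (R : realDomainType) (n m s : nat)
    (p : 'I_m -> R) (v : 'I_n -> 'I_m -> R) (phi : 'I_m -> 'I_s -> R) : R :=
  \sum_(S < s) max2 (fun i : 'I_n => \sum_(j < m) p j * v i j * phi j S).

Definition max_mixed_revenue (R : realDomainType) (n m : nat)
    (p : 'I_m -> R) (v : 'I_n -> 'I_m -> R) (r : R) : Prop :=
  (exists (s : nat) (phi : 'I_m -> 'I_s -> R),
      mixed_scheme phi /\ revenue p v phi = r) /\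
  (forall (s : nat) (phi : 'I_m -> 'I_s -> R),
      mixed_scheme phi -> revenue p v phi <= r).

Definition max_pure_revenue (R : realDomainType) (n m : nat)
    (p : 'I_m -> R) (v : 'I_n -> 'I_m -> R) (r : R) : Prop :=
  (exists (s : nat) (phi : 'I_m -> 'I_s -> R),
      pure_scheme phi /\ revenue p v phi = r) /\
  (forall (s : nat) (phi : 'I_m -> 'I_s -> R),
      pure_scheme phi -> revenue p v phi <= r).

From mathcomp Require Import all_boot all_order all_algebra.
From mathcomp Require Import reals.
From mathcomp Require Import lra.
Set Implicit Arguments. Unset Strict Implicit. Unset Printing Implicit Defensive.
Import Order.TTheory GRing.Theory Num.Theory.
Local Open Scope ring_scope.

(* Let bidders a, b, c value only their own type, with psi = 2, 1, 1 on the
   diagonal, and all other bidders value nothing.  In every signal the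
   second-highest bid is at most the sum of the bids of b and c, so no scheme
   earns more than 2; splitting type a evenly between two signals, one joined
   by type b and one by type c, gives two bids equal to 1 in each signal and
   earns exactly 2.  A pure scheme sends type a to a single signal S, which
   earns at most max(phi b S, phi c S); in every other signal bidder a bids 0,
   so it earns at most the bid of b and at most that of c.  Summing, a pure
   scheme earns at most 1, which pooling all types attains. *)

Section SecondLargest.
Variable R : realDomainType.

Lemma sorted_nth1_le (l : seq R) (c : R) :
  sorted >=%R l -> (1 < size l)%N ->
  (nth 0 l 1 <= c) = (count [pred y : R | (c < y)%R] l <= 1)%N.
Proof.
case: l => [|x [|y l]] //=; rewrite (path_sortedE ge_trans) => /andP[yx].
case/andP=> /allP ly _ _; case: (leP y c) => [yc | cy].
  have -> : count [pred y : R | (c < y)%R] l = 0%N.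
    apply/eqP; rewrite eqn0Ngt -has_count; apply/hasPn => z /ly zy.
    by rewrite /= -leNgt (le_trans zy yc).
  by rewrite /=; case: (c < x).
by rewrite /= (lt_le_trans cy yx).
Qed.

Lemma max2_leE n (x : 'I_n -> R) c : (1 < n)%N ->
  (max2 x <= c) = (#|[pred i | (c < x i)%R]| <= 1)%N.
Proof.
move=> n_gt1; rewrite /max2 sorted_nth1_le; last first.
- by rewrite size_sort size_map size_enum_ord.
- by apply: sort_sorted => u w; apply: le_total.
by rewrite count_sort count_map enumT cardE /enum_mem size_filter.
Qed.

Lemma max2_le n (x : 'I_n -> R) i0 c : (1 < n)%N ->
  (forall i, i != i0 -> x i <= c) -> max2 x <= c.
Proof.
move=> n_gt1 x_le; rewrite max2_leE // -(card1 i0) subset_leq_card //.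
by apply/subsetP => i; rewrite !inE; apply: contraLR => /x_le; rewrite leNgt.
Qed.

Lemma ord_neq_gt1 n (i j : 'I_n) : i != j -> (1 < n)%N.
Proof.
by move=> neq_ij; have := max_card [set i; j]; rewrite cards2 neq_ij card_ord; apply.
Qed.

Lemma max2_ge_min n (x : 'I_n -> R) i i' : i != i' ->
  Num.min (x i) (x i') <= max2 x.
Proof.
move=> neq_ii'; have card_ii' : #|[set i; i']| = 2 by rewrite cards2 neq_ii'.
rewrite leNgt; apply/negP => lt_max2.
have := lexx (max2 x); rewrite max2_leE; last exact: ord_neq_gt1 neq_ii'.
rewrite leqNgt => /negP; apply.
rewrite -[X in (X <= _)%N]card_ii' subset_leq_card //; apply/subsetP => j.
by rewrite !inE => /orP[]/eqP->; move: lt_max2; rewrite lt_min => /andP[].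
Qed.

Lemma eq_max2 n (x y : 'I_n -> R) : x =1 y -> max2 x = max2 y.
Proof. by move=> eq_xy; rewrite /max2 (eq_map eq_xy). Qed.

End SecondLargest.


Lemma pure_scheme_signal (R : realDomainType) m s (phi : 'I_m -> 'I_s -> R) j :
  pure_scheme phi -> exists2 S, phi j S = 1 & forall S', S' != S -> phi j S' = 0.
Proof.
case=> -[phi01 sum_phi] phi_bool.
have [S /eqP phiS | phi_neq1] := pickP (fun S => phi j S == 1); last first.
  have := sum_phi j; rewrite big1 => [/esym/eqP|S _]; first by rewrite oner_eq0.
  by case: (phi_bool j S) => // phiS; move: (phi_neq1 S); rewrite phiS eqxx.
exists S => //; apply: psumr_eq0P => [S' _|]; first by case: (phi01 j S').
by move: (sum_phi j); rewrite (bigD1 S) //= phiS; lra.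
Qed.

Section DiagonalAuction.
Variables (R : realFieldType) (n : nat).

Definition uniform_prior (j : 'I_n) : R := n%:R^-1.

Definition diagonal_values (w : 'I_n -> R) (i j : 'I_n) : R :=
  if i == j then w i * n%:R else 0.

Lemma revenue_diagonal w s (phi : 'I_n -> 'I_s -> R) : (0 < n)%N ->
  revenue uniform_prior (diagonal_values w) phi =
  \sum_(S < s) max2 (fun i => w i * phi i S).
Proof.
move=> n_gt0; apply: eq_bigr => S _; apply: eq_max2 => i.
rewrite (bigD1 i) //= big1 ?addr0 => [|j /negbTE neq_ji]; last first.
  by rewrite /diagonal_values eq_sym neq_ji mulr0 mul0r.
by rewrite /uniform_prior /diagonal_values eqxx mulrCA mulVf ?mulr1 // pnatr_eq0 -lt0n.
Qed.

Lemma diagonal_auction w : (1 < n)%N -> (forall i, 0 <= w i) ->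
  is_auction uniform_prior (diagonal_values w).
Proof.
move=> n_gt1 w_ge0; split=> //; split=> [j|]; first by rewrite invr_ge0 ler0n.
split=> [|i j]; last by rewrite /diagonal_values; case: eqP => // _; rewrite mulr_ge0.
rewrite sumr_const card_ord -[_ *+ n]mulr_natr mulVf // pnatr_eq0 -lt0n.
exact: ltnW.
Qed.

End DiagonalAuction.

Section ThreeBidders.
Variables (R : realFieldType) (n : nat) (a b c : 'I_n).
Hypotheses (neq_ab : a != b) (neq_ac : a != c) (neq_bc : b != c).

Definition weight (i : 'I_n) : R := if i == a then 2 else ((i == b) || (i == c))%:R.

Local Notation p := (@uniform_prior R n).
Local Notation v := (diagonal_values weight).
Local Notation bids phi S := (fun i => weight i * phi i S).

Let n_gt1 : (1 < n)%N := ord_neq_gt1 neq_ab.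

Lemma weight_ge0 i : 0 <= weight i.
Proof. by rewrite /weight; case: ifP. Qed.

Lemma three_bidder_auction : is_auction p v.
Proof. exact: diagonal_auction n_gt1 weight_ge0. Qed.

Lemma revenue_bids s (phi : 'I_n -> 'I_s -> R) :
  revenue p v phi = \sum_(S < s) max2 (bids phi S).
Proof. by rewrite revenue_diagonal // ltnW // n_gt1. Qed.

Lemma max2_bids_le s (phi : 'I_n -> 'I_s -> R) S i0 t : 0 <= t ->
  (i0 != a -> 2 * phi a S <= t) -> (i0 != b -> phi b S <= t) ->
  (i0 != c -> phi c S <= t) -> max2 (bids phi S) <= t.
Proof.
move=> t_ge0 le_a le_b le_c; apply: (max2_le (i0 := i0) n_gt1) => i.
rewrite /weight; have [->|_] := eqVneq i a; first by rewrite eq_sym => /le_a.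
have [->|_] := eqVneq i b; first by rewrite mul1r eq_sym => /le_b.
have [->|_] := eqVneq i c; first by rewrite mul1r eq_sym => /le_c.
by rewrite mul0r.
Qed.

Lemma revenue_mixed_le s (phi : 'I_n -> 'I_s -> R) :
  mixed_scheme phi -> revenue p v phi <= 2.
Proof.
case=> phi01 sum_phi; have phi_ge0 j S : 0 <= phi j S := (phi01 j S).1.
have <- : \sum_(S < s) (phi b S + phi c S) = 2 by rewrite big_split /= !sum_phi.
rewrite revenue_bids; apply: ler_sum => S _.
apply: (max2_bids_le (i0 := a)); rewrite ?eqxx ?addr_ge0 //.
  by rewrite lerDl.
by rewrite lerDr.
Qed.

Definition split_scheme (j : 'I_n) (S : 'I_2) : R :=
  if j == a then 2^-1 else if j == c then (S == ord_max)%:R else (S == ord0)%:R.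

Lemma split_scheme_mixed : mixed_scheme split_scheme.
Proof.
split=> [j S|j]; rewrite /split_scheme.
  case: ifP => _; first by rewrite invr_ge0 ler0n invf_le1 ?ler1n ?ltr0n.
  by case: ifP => _; rewrite ler0n lern1 leq_b1.
rewrite big_ord_recl big_ord1; case: ifP => _; first lra.
by case: ifP => _; rewrite /= ?addr0 ?add0r.
Qed.

Lemma revenue_split_scheme : revenue p v split_scheme = 2.
Proof.
apply/le_anti; rewrite (revenue_mixed_le split_scheme_mixed) /=.
have bid_a S : weight a * split_scheme a S = 1.
  by rewrite /weight /split_scheme eqxx mulfV ?pnatr_eq0.
have bid_ge1 S j : j != a -> weight j * split_scheme j S = 1 ->
    1 <= max2 (bids split_scheme S).
  by move=> neq_ja bid_j; rewrite -[1]minxx -{1}(bid_a S) -bid_j max2_ge_min // eq_sym.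
rewrite revenue_bids big_ord_recl big_ord1 -[2]/(1 + 1) lerD //.
  apply: (bid_ge1 _ b); first by rewrite eq_sym.
  by rewrite /weight /split_scheme eq_sym (negbTE neq_ab) (negbTE neq_bc) !eqxx mulr1.
apply: (bid_ge1 _ c); first by rewrite eq_sym.
by rewrite /weight /split_scheme eq_sym (negbTE neq_ac) !eqxx orbT mulr1.
Qed.

Lemma revenue_pure_le s (phi : 'I_n -> 'I_s -> R) :
  pure_scheme phi -> revenue p v phi <= 1.
Proof.
move=> pure_phi; have [[phi01 sum_phi] _] := pure_phi.
have phi_ge0 j S : 0 <= phi j S := (phi01 j S).1.
have [Sa _ phi_a0] := pure_scheme_signal a pure_phi.
have sum_rest j : \sum_(S < s | S != Sa) phi j S = 1 - phi j Sa.
  by rewrite -(sum_phi j) [in RHS](bigD1 Sa) //= addrAC subrr add0r.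
have rest_le_b : \sum_(S < s | S != Sa) max2 (bids phi S) <= 1 - phi b Sa.
  rewrite -sum_rest; apply: ler_sum => S neq_S.
  by apply: (max2_bids_le (i0 := c)); rewrite ?phi_a0 ?mulr0 ?eqxx.
have rest_le_c : \sum_(S < s | S != Sa) max2 (bids phi S) <= 1 - phi c Sa.
  rewrite -sum_rest; apply: ler_sum => S neq_S.
  by apply: (max2_bids_le (i0 := b)); rewrite ?phi_a0 ?mulr0 ?eqxx.
have top_le : max2 (bids phi Sa) <= Num.max (phi b Sa) (phi c Sa).
  by apply: (max2_bids_le (i0 := a)); rewrite ?eqxx ?le_max ?lexx ?phi_ge0 ?orbT.
rewrite revenue_bids (bigD1 Sa) //=; move: top_le; rewrite le_max => /orP[top_le | top_le].
  by apply: le_trans (lerD top_le rest_le_b) _; rewrite addrC subrK.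
by apply: le_trans (lerD top_le rest_le_c) _; rewrite addrC subrK.
Qed.

Definition pooling_scheme (j : 'I_n) (S : 'I_1) : R := 1.

Lemma pooling_scheme_pure : pure_scheme pooling_scheme.
Proof.
split=> [|j S]; last by right.
by split=> [j S|j]; rewrite /pooling_scheme ?big_ord1 ?ler01.
Qed.

Lemma revenue_pooling_scheme : revenue p v pooling_scheme = 1.
Proof.
apply/le_anti; rewrite (revenue_pure_le pooling_scheme_pure) /=.
rewrite revenue_bids big_ord1; apply: le_trans (max2_ge_min _ neq_ab).
by rewrite /weight /pooling_scheme eqxx eq_sym (negbTE neq_ab) eqxx !mulr1 le_min ler1n lexx.
Qed.

Lemma three_bidder_max_mixed_revenue : max_mixed_revenue p v 2.
Proof.
split; last exact: revenue_mixed_le.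
exists 2%N, split_scheme.
by split; [apply: split_scheme_mixed | apply: revenue_split_scheme].
Qed.

Lemma three_bidder_max_pure_revenue : max_pure_revenue p v 1.
Proof.
split; last exact: revenue_pure_le.
exists 1%N, pooling_scheme.
by split; [apply: pooling_scheme_pure | apply: revenue_pooling_scheme].
Qed.

End ThreeBidders.

Theorem theorem1 (R : realType) (k : nat) (hk : (2 <= k)%N) (hev : ~~ odd k) :
  exists (p : 'I_k.+1 -> R) (v : 'I_k.+1 -> 'I_k.+1 -> R) (rmix rpure : R),
    is_auction p v /\
    max_mixed_revenue p v rmix /\
    max_pure_revenue p v rpure /\
    0 < rpure /\
    rmix = 2 * rpure.
Proof.
(* The instance does not need k to be even. *)
pose b : 'I_k.+1 := inord 1; pose c : 'I_k.+1 := inord 2.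
have val_b : b = 1%N :> nat by rewrite /b inordK // ltnS; apply: ltnW.
have val_c : c = 2%N :> nat by rewrite /c inordK.
have neq_ab : ord0 != b by rewrite -val_eqE /= val_b.
have neq_ac : ord0 != c by rewrite -val_eqE /= val_c.
have neq_bc : b != c by rewrite -val_eqE /= val_b val_c.
exists (@uniform_prior R k.+1), (diagonal_values (@weight R _ ord0 b c)), 2, 1.
split; first exact: three_bidder_auction.
split; first exact: three_bidder_max_mixed_revenue.
split; first exact: three_bidder_max_pure_revenue.
by rewrite ltr01 mulr1.
Qed.
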